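(* Let $A\in\mathbb{R}^{m\times N}$ and $K\subseteq[N]$. The following are equivalent: (i) $\ker(A)\cap N_K\cap H_K=\{0\}$; (ii) $\mathbb{1}_K$ is the unique solution of $(P_{\mathrm{bin}})$ with $b=A\mathbb{1}_K$. Moreover, if one of these holds, then $\mathbb{1}_K$ is the unique vector of minimal $\|\cdot\|_0$ among all $x\in\{0,1\}^N$ with $Ax=A\mathbb{1}_K$.
   Context: $[N]=\{1,\dots,N\}$; $\mathbb{1}_K$ is the vector with entries $1$ on $K$ and $0$ elsewhere; $K^C=[N]\setminus K$; for $w\in\mathbb{R}^N$ and $S\subseteq[N]$, $w_S$ denotes the vector agreeing with $w$ on $S$ and zero elsewhere; $\|x\|_0$ is the number of nonzero entries. $N_K=\{w\in\mathbb{R}^N:\|w_K\|_1\ge\|w_{K^C}\|_1\}$ and $H_K=\{w\in\mathbb{R}^N: w_i\le 0 \text{ for } i\in K,\ w_i\ge 0\text{ for } i\in K^C\}$. $(P_{\mathrm{bin}})$ is the program $\min\|x\|_1$ subject to $Ax=b$ and $x\in[0,1]^N$; ''unique solution'' means unique minimizer. *)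

From mathcomp Require Import all_boot all_order all_algebra.
From mathcomp Require Import reals.
Set Implicit Arguments. Unset Strict Implicit. Unset Printing Implicit Defensive.
Import Order.TTheory GRing.Theory Num.Theory.
Local Open Scope ring_scope.

(* Vectors in R^N are column vectors 'cV[R]_N ; [N] is 'I_N (0-based). *)
Section Defs.
Variable R : realType.
Variable N : nat.

Definition indic (K : {set 'I_N}) : 'cV[R]_N :=
  \col_i (if i \in K then 1 else 0).

Definition restr (w : 'cV[R]_N) (S : {set 'I_N}) : 'cV[R]_N :=
  \col_i (if i \in S then w i 0 else 0).

Definition l1norm (x : 'cV[R]_N) : R := \sum_i `|x i 0|.

Definition l0norm (x : 'cV[R]_N) : nat := #|[set i | x i 0 != 0]|.

Definition inNK (K : {set 'I_N}) (w : 'cV[R]_N) : Prop :=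
  l1norm (restr w (~: K)) <= l1norm (restr w K).

Definition inHK (K : {set 'I_N}) (w : 'cV[R]_N) : Prop :=
  forall i, (i \in K -> w i 0 <= 0) /\ (i \notin K -> 0 <= w i 0).

Definition Pbin_feasible m (A : 'M[R]_(m, N)) (b : 'cV[R]_m) (x : 'cV[R]_N) : Prop :=
  A *m x = b /\ forall i, 0 <= x i 0 <= 1.

Definition Pbin_unique_solution m (A : 'M[R]_(m, N)) (b : 'cV[R]_m)
    (x0 : 'cV[R]_N) : Prop :=
  Pbin_feasible A b x0 /\
  (forall x, Pbin_feasible A b x -> l1norm x0 <= l1norm x) /\
  (forall x, Pbin_feasible A b x -> l1norm x = l1norm x0 -> x = x0).

Definition binary (x : 'cV[R]_N) : Prop := forall i, x i 0 = 0 \/ x i 0 = 1.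

End Defs.

From mathcomp Require Import all_boot all_order all_algebra.
From mathcomp Require Import reals.
From mathcomp Require Import lra.
Import Order.TTheory GRing.Theory Num.Theory.
Set Implicit Arguments. Unset Strict Implicit. Unset Printing Implicit Defensive.
Local Open Scope ring_scope.

(* Write a point of the box [0,1]^N as 1_K + w: the box constraint says exactly
   that w lies in H_K with |w_i| <= 1, and for such w the l1 norm is affine,
   ||1_K + w||_1 = ||1_K||_1 + ||w_{K^C}||_1 - ||w_K||_1.  Hence a feasible x
   does at least as well as 1_K iff x - 1_K lies in N_K, which together with
   x - 1_K in ker A gives (i) => (ii).  Conversely, a nonzero w in
   ker A, N_K and H_K, scaled down to have entries of size at most 1, yields a
   second minimizer 1_K + t w.  On binary vectors ||.||_0 = ||.||_1, so the
   last claim follows from (ii). *)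

Section L1Geometry.
Variables (R : realType) (N : nat) (K : {set 'I_N}).

Definition unit_box (x : 'cV[R]_N) : Prop := forall i, 0 <= x i 0 <= 1.

Definition unit_bounded (w : 'cV[R]_N) : Prop := forall i, `|w i 0| <= 1.

Lemma l1norm_ge0 (x : 'cV[R]_N) : 0 <= l1norm x.
Proof. exact: sumr_ge0. Qed.

Lemma norm_entry_le_l1norm (x : 'cV[R]_N) i : `|x i 0| <= l1norm x.
Proof. by rewrite /l1norm (bigD1 i) //= lerDl sumr_ge0. Qed.

Lemma l1norm_restrZ (t : R) (w : 'cV[R]_N) (S : {set 'I_N}) : 0 <= t ->
  l1norm (restr (t *: w) S) = t * l1norm (restr w S).
Proof.
move=> t_ge0; rewrite /l1norm mulr_sumr; apply: eq_bigr => i _.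
by rewrite !mxE; case: (i \in S); rewrite ?normr0 ?mulr0 // normrM ger0_norm.
Qed.

Lemma inNKZ (t : R) (w : 'cV[R]_N) : 0 <= t -> inNK K w -> inNK K (t *: w).
Proof. by move=> t_ge0; rewrite /inNK !l1norm_restrZ // => /ler_wpM2l; apply. Qed.

Lemma inHKZ (t : R) (w : 'cV[R]_N) : 0 <= t -> inHK K w -> inHK K (t *: w).
Proof.
move=> t_ge0 wH i; rewrite mxE; have [wK wKC] := wH i.
by split=> iK; [rewrite mulr_ge0_le0 ?wK | rewrite mulr_ge0 ?wKC].
Qed.

Lemma unit_boundedZ_l1norm (w : 'cV[R]_N) :
  unit_bounded ((1 + l1norm w)^-1 *: w).
Proof.
have pos : 0 < 1 + l1norm w by rewrite ltr_pwDl ?l1norm_ge0.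
move=> i; rewrite mxE normrM ger0_norm; last by rewrite invr_ge0 ltW.
rewrite mulrC ler_pdivrMr // mul1r.
by apply: le_trans (norm_entry_le_l1norm w i) _; lra.
Qed.

Lemma unit_box_indicD (w : 'cV[R]_N) :
  inHK K w -> unit_bounded w -> unit_box (indic R K + w).
Proof.
move=> wH wb i; rewrite !mxE; have [wK wKC] := wH i; have := wb i.
case: (boolP (i \in K)) => iK.
  by have w_le0 := wK iK; rewrite ler0_norm // => ?; apply/andP; split; lra.
by have w_ge0 := wKC iK; rewrite ger0_norm // => ?; apply/andP; split; lra.
Qed.

Lemma inHK_subr_indic (x : 'cV[R]_N) : unit_box x -> inHK K (x - indic R K).
Proof.
move=> xbox i; rewrite !mxE; have /andP[x_ge0 x_le1] := xbox i.
by split=> iK; rewrite ?iK ?(negPf iK); lra.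
Qed.

Lemma unit_bounded_subr_indic (x : 'cV[R]_N) :
  unit_box x -> unit_bounded (x - indic R K).
Proof.
move=> xbox i; rewrite !mxE; have /andP[x_ge0 x_le1] := xbox i.
by case: (i \in K); rewrite ler_norml; apply/andP; split; lra.
Qed.

Lemma l1norm_indicD (w : 'cV[R]_N) : inHK K w -> unit_bounded w ->
  l1norm (indic R K + w) + l1norm (restr w K) =
  l1norm (indic R K) + l1norm (restr w (~: K)).
Proof.
move=> wH wb; rewrite /l1norm -!big_split; apply: eq_bigr => i _ /=.
rewrite !mxE in_setC; have [wK _] := wH i; have := wb i.
case: (boolP (i \in K)) => iK /=; last by rewrite normr0 !add0r addr0.
have w_le0 := wK iK; rewrite ler0_norm // => w_geN1.
by rewrite ger0_norm ?normr1 ?normr0; lra.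
Qed.

Lemma l1norm_indicD_le (w : 'cV[R]_N) : inHK K w -> unit_bounded w ->
  l1norm (indic R K + w) <= l1norm (indic R K) <-> inNK K w.
Proof.
move=> wH wb; rewrite /inNK -(lerD2r (l1norm (restr w K))) l1norm_indicD //.
by rewrite lerD2l.
Qed.

Lemma binary_indic : binary (indic R K).
Proof. by move=> i; rewrite mxE; case: (i \in K); [right | left]. Qed.

Lemma binary_unit_box (x : 'cV[R]_N) : binary x -> unit_box x.
Proof. by move=> xb i; case: (xb i) => ->; rewrite lexx ler01. Qed.

Lemma l0norm_binary (x : 'cV[R]_N) : binary x -> (l0norm x)%:R = l1norm x.
Proof.
move=> xb; rewrite /l1norm /l0norm (bigID (fun i => x i 0 != 0)) /=.
rewrite [X in _ + X]big1 => [|i /negPn/eqP ->]; last by rewrite normr0.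
rewrite addr0 (eq_bigr (fun=> 1)) => [|i /negPf]; last first.
  by case: (xb i) => ->; rewrite ?eqxx // normr1.
by rewrite sumr_const; congr (_ *+ _); apply: eq_card => i; rewrite inE.
Qed.

End L1Geometry.

Section BinaryProgram.
Variables (R : realType) (m N : nat) (A : 'M[R]_(m, N)) (K : {set 'I_N}).

Definition null_space_property : Prop :=
  forall w : 'cV[R]_N, A *m w = 0 -> inNK K w -> inHK K w -> w = 0.

Let e := indic R K.

Lemma Pbin_feasible_indic : Pbin_feasible A (A *m e) e.
Proof. by split=> //; apply/binary_unit_box/binary_indic. Qed.

Lemma Pbin_feasible_l1norm_le (x : 'cV[R]_N) :
  null_space_property -> Pbin_feasible A (A *m e) x ->
  l1norm x <= l1norm e -> x = e.
Proof.
move=> nsp [Ax xbox] x_le.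
have wH := inHK_subr_indic K xbox; have wb := unit_bounded_subr_indic K xbox.
have wN : inNK K (x - e) by apply/(l1norm_indicD_le wH wb); rewrite subrKC.
by apply/eqP; rewrite -subr_eq0; apply/eqP/nsp; rewrite // mulmxBr Ax subrr.
Qed.

Lemma null_space_property_Pbin_unique :
  null_space_property -> Pbin_unique_solution A (A *m e) e.
Proof.
move=> nsp; split; first exact: Pbin_feasible_indic.
split=> [x xfeas | x xfeas x_eq]; last first.
  by apply: Pbin_feasible_l1norm_le; rewrite ?x_eq.
have [//|x_lt] := leP (l1norm e) (l1norm x).
by have := x_lt; rewrite (Pbin_feasible_l1norm_le nsp xfeas (ltW x_lt)) ltxx.
Qed.

Lemma Pbin_unique_null_space_property :
  Pbin_unique_solution A (A *m e) e -> null_space_property.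
Proof.
move=> [_ [emin euniq]] w Aw wN wH.
pose t := (1 + l1norm w)^-1.
have t_gt0 : 0 < t by rewrite invr_gt0 ltr_pwDl ?l1norm_ge0.
have twH := inHKZ (ltW t_gt0) wH.
have twb : unit_bounded (t *: w) by apply: unit_boundedZ_l1norm.
have xfeas : Pbin_feasible A (A *m e) (e + t *: w).
  split; last exact: unit_box_indicD.
  by rewrite mulmxDr -scalemxAr Aw scaler0 addr0.
have x_le : l1norm (e + t *: w) <= l1norm e.
  by apply/l1norm_indicD_le => //; apply: inNKZ (ltW t_gt0) wN.
have /addrI/eqP : e + t *: w = e + 0.
  by rewrite addr0; apply: euniq => //; apply/eqP; rewrite eq_le x_le emin.
by rewrite scaler_eq0 gt_eqF // => /eqP.
Qed.

Lemma Pbin_unique_l0norm_min (x : 'cV[R]_N) :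
  Pbin_unique_solution A (A *m e) e -> binary x -> A *m x = A *m e ->
  (l0norm e <= l0norm x)%N /\ (l0norm x = l0norm e -> x = e).
Proof.
move=> [_ [emin euniq]] xb Ax.
have xfeas : Pbin_feasible A (A *m e) x by split; last exact: binary_unit_box.
have eb : binary e := binary_indic R K.
split; first by rewrite -(ler_nat R) !l0norm_binary // emin.
by move=> x_eq; apply: euniq; rewrite // -!l0norm_binary // x_eq.
Qed.

End BinaryProgram.

Theorem theorem2p3 (R : realType) (m N : nat) (A : 'M[R]_(m, N))
    (K : {set 'I_N}) :
  ((forall w : 'cV[R]_N, A *m w = 0 -> inNK K w -> inHK K w -> w = 0) <->
   Pbin_unique_solution A (A *m indic R K) (indic R K)) /\
  ((forall w : 'cV[R]_N, A *m w = 0 -> inNK K w -> inHK K w -> w = 0) ->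
   binary (indic R K) /\
   forall x : 'cV[R]_N, binary x -> A *m x = A *m indic R K ->
     (l0norm (indic R K) <= l0norm x)%N /\
     (l0norm x = l0norm (indic R K) -> x = indic R K)).
Proof.
split.
  split; [exact: null_space_property_Pbin_unique |
          exact: Pbin_unique_null_space_property].
move=> /null_space_property_Pbin_unique euniq; split; first exact: binary_indic.
by move=> x; apply: Pbin_unique_l0norm_min.
Qed.
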